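(* There is an absolute constant $C>0$ such that for every $n\ge2$, all concave non-decreasing valuations $v_1,\dots,v_n:[0,1]\to\mathbb R_{\ge0}$ and all budgets $B_1,\dots,B_n>0$, the final allocation $y$ of the Estimate-and-Price auction (player $r_1$ receiving his allocation as specified by the auction, every other player $i$ receiving $x_i$ from Sell-Without-$r_1$) satisfies $\bar W(y)\ge\frac{1}{C\log n}\bar W^*$.
   Context: One divisible good (the interval $[0,1]$), $n\ge2$ players with valuations $v_i$ and budgets $B_i$. Let $\bar v_i(y)=\min\{v_i(y),B_i\}$ and $k=\lceil 8\log_2 n\rceil$. Liquid welfare: $\bar W(y)=\sum_i\min\{v_i(y_i),B_i\}$; $\bar W^*=\sup\{\bar W(y):y\in\mathbb R^n_{\ge0},\sum_iy_i=1\}$. Sell-Without-$r$ (for a player $r$): define $p:[0,\frac12]\to\mathbb R_{\ge0}$ by $p(t)=p_j=\frac{2^j}{8}\bar v_r(\frac12)$ for $t\in[\frac{j-1}{2k},\frac{j}{2k})$, $j=1,\dots,k$. The players other than $r$ are processed in a fixed arbitrary order; when player $i$'s turn comes, let $z_i$ be the total amount taken by earlier players; player $i$ takes $x_i\in[0,\frac12-z_i]$ maximizing $v_i(x_i)-\int_{z_i}^{z_i+x_i}p(t)\,dt$ subject to $\int_{z_i}^{z_i+x_i}p(t)\,dt\le B_i$, and pays $\pi_i=\int_{z_i}^{z_i+x_i}p(t)\,dt$. Estimate-and-Price: let $r_1=\arg\max_i\bar v_i(\frac12)$ and $r_2=\arg\max_{i\ne r_1}\bar v_i(\frac12)$ (fixed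 tie-breaking). Let $(x,\pi)$ be the outcome of Sell-Without-$r_1$ on players $[n]\setminus\{r_1\}$ and $(x',\pi')$ that of Sell-Without-$r_2$ on players $[n]\setminus\{r_2\}$. Each $i\ne r_1$ receives $x_i$ and pays $\pi_i$. Player $r_1$ receives $x'_{r_1}$ and pays $\pi'_{r_1}$ if $v_{r_1}(x'_{r_1})-\pi'_{r_1}\ge v_{r_1}(\frac12)-2\bar v_{r_2}(\frac12)$; otherwise he receives $\frac12$ and pays $2\bar v_{r_2}(\frac12)$. *)

From Stdlib Require Import Reals Lra Lia List Permutation.
Import ListNotations.
Open Scope R_scope.

(* Players are the naturals 0..n-1; valuations v i : R -> R (relevant on [0,1]). *)

Definition vbar (v : nat -> R -> R) (B : nat -> R) (i : nat) (y : R) : R :=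
  Rmin (v i y) (B i).

Definition sumR (l : list nat) (f : nat -> R) : R :=
  fold_right (fun i acc => f i + acc) 0 l.

Definition players (n : nat) : list nat := seq 0 n.

Definition LW (n : nat) (v : nat -> R -> R) (B : nat -> R) (y : nat -> R) : R :=
  sumR (players n) (fun i => vbar v B i (y i)).

Definition feasible (n : nat) (y : nat -> R) : Prop :=
  (forall i, (i < n)%nat -> 0 <= y i) /\ sumR (players n) y = 1.

(* the set of achievable liquid welfares; \bar W^* is its least upper bound *)
Definition LW_values (n : nat) (v : nat -> R -> R) (B : nat -> R) (w : R) : Prop :=
  exists y, feasible n y /\ w = LW n v B y.

(* log base 2 and k = ceil (8 log2 n);  ceil x = 1 - up (-x) *)
Definition log2R (x : R) : R := ln x / ln 2.
Definition kpar (n : nat) : nat := Z.to_nat (1 - up (- (8 * log2R (INR n)))).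

(* The price function p on [0,1/2): p(t) = 2^j/8 * c on [(j-1)/(2k), j/(2k)),
   j = 1..k, where c = \bar v_r(1/2).  Its cumulative integral
   Pcum c k t = \int_0^t p(s) ds  for t in [0,1/2], written out as the sum over
   steps of (height) * (length of [0,t] ∩ [(j-1)/(2k), j/(2k))). *)
Definition step_overlap (k j : nat) (t : R) : R :=
  Rmax 0 (Rmin t (INR j / (2 * INR k)) - INR (j - 1) / (2 * INR k)).

Definition Pcum (c : R) (k : nat) (t : R) : R :=
  sumR (seq 1 k) (fun j => (2 ^ j / 8 * c) * step_overlap k j t).

Definition cost (c : R) (k : nat) (z x : R) : R := Pcum c k (z + x) - Pcum c k z.

Definition best_response (v : nat -> R -> R) (B : nat -> R) (c : R) (k : nat)
  (i : nat) (z xi : R) : Prop :=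
  0 <= xi <= 1/2 - z /\ cost c k z xi <= B i /\
  forall x', 0 <= x' <= 1/2 - z -> cost c k z x' <= B i ->
    v i x' - cost c k z x' <= v i xi - cost c k z xi.

Fixpoint sell_run (v : nat -> R -> R) (B : nat -> R) (c : R) (k : nat)
  (order : list nat) (z : R) (x pi : nat -> R) : Prop :=
  match order with
  | [] => True
  | i :: rest =>
      best_response v B c k i z (x i) /\ pi i = cost c k z (x i) /\
      sell_run v B c k rest (z + x i) x pi
  end.

Definition SellWithout (n : nat) (v : nat -> R -> R) (B : nat -> R) (r : nat)
  (x pi : nat -> R) : Prop :=
  exists order,
    Permutation order (filter (fun i => negb (Nat.eqb i r)) (players n)) /\
    sell_run v B (vbar v B r (1/2)) (kpar n) order 0 x pi.

Definition EP_alloc (v : nat -> R -> R) (B : nat -> R) (r1 r2 : nat)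
  (x x' pi' : nat -> R) (i : nat) : R :=
  if Nat.eqb i r1 then
    (if Rle_dec (v r1 (1/2) - 2 * vbar v B r2 (1/2)) (v r1 (x' r1) - pi' r1)
     then x' r1 else 1/2)
  else x i.

Definition concave_on01 (f : R -> R) : Prop :=
  forall a b t, 0 <= a <= 1 -> 0 <= b <= 1 -> 0 <= t <= 1 ->
    t * f a + (1 - t) * f b <= f (t * a + (1 - t) * b).

Definition nondecr_on01 (f : R -> R) : Prop :=
  forall a b, 0 <= a -> a <= b -> b <= 1 -> f a <= f b.

Definition nonneg_on01 (f : R -> R) : Prop :=
  forall a, 0 <= a <= 1 -> 0 <= f a.

From Stdlib Require Import Reals Lra Lia List Permutation ZArith.
Open Scope R_scope.

(* Let c = \bar v_{r1}(1/2), c2 = \bar v_{r2}(1/2), k = kpar n and D = 1/(2k) the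
   length of a price step.  The welfare of the auction splits as Wr1 + Woth, the
   capped value of r1 plus that of the buyers of Sell-Without-r1 (all players but
   r1), and we show  \bar W(y) <= 32 k (Wr1 + Woth)  for every feasible y:
   - revenue is at most welfare, since a best response never pays more than its
     capped value; so the revenue Pcum(sold) is at most Woth;
   - by concavity every capped valuation is at most 2c on [0,1], and a buyer who
     stopped where the marginal price was at most H satisfies
     \bar v_i(y) <= \bar v_i(x_i) + H y for all y;
   - r1 gets at least c - 2 c2, and r2 (being different from r1) is a buyer.
   If nearly all of [0,1/2] was sold, the revenue is at least n c/(16k), since the top
   prices are at least 2^(k-1) c/8 >= n c/8.  Otherwise the sale ended on some
   step m, every buyer faced prices at most H = 2^(m+2) c/8, and the revenue is at
   least D times the price of step m, which bounds H.  Finally k <= 18 ln n. *)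

Lemma sumR_app l1 l2 f : sumR (l1 ++ l2) f = sumR l1 f + sumR l2 f.
Proof. induction l1; simpl; [lra | rewrite IHl1; lra]. Qed.

Lemma sumR_perm l l' f : Permutation l l' -> sumR l f = sumR l' f.
Proof. induction 1; simpl; lra. Qed.

Lemma sumR_ext l f g : (forall i, In i l -> f i = g i) -> sumR l f = sumR l g.
Proof.
  induction l; simpl; intros H; [lra |].
  rewrite H, IHl; auto.
Qed.

Lemma sumR_le l f g : (forall i, In i l -> f i <= g i) -> sumR l f <= sumR l g.
Proof.
  induction l; simpl; intros H; [lra |].
  assert (f a <= g a) by auto. assert (sumR l f <= sumR l g) by auto. lra.
Qed.

Lemma sumR_plus l f g : sumR l (fun i => f i + g i) = sumR l f + sumR l g.
Proof. induction l; simpl; [lra | rewrite IHl; lra]. Qed.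

Lemma sumR_minus l f g : sumR l (fun i => f i - g i) = sumR l f - sumR l g.
Proof. induction l; simpl; [lra | rewrite IHl; lra]. Qed.

Lemma sumR_scal l a f : sumR l (fun i => a * f i) = a * sumR l f.
Proof. induction l; simpl; [lra | rewrite IHl; lra]. Qed.

Lemma sumR_nonneg l f : (forall i, In i l -> 0 <= f i) -> 0 <= sumR l f.
Proof.
  induction l; simpl; intros H; [lra |].
  assert (0 <= f a) by auto. assert (0 <= sumR l f) by auto. lra.
Qed.

Lemma sumR_mem l f i : (forall j, In j l -> 0 <= f j) -> In i l -> f i <= sumR l f.
Proof.
  induction l; simpl; intros H Hi; [contradiction |].
  destruct Hi as [-> | Hi].
  - assert (0 <= sumR l f) by (apply sumR_nonneg; auto). lra.
  - assert (0 <= f a) by auto. assert (f i <= sumR l f) by auto. lra.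
Qed.

Lemma sumR_const l a : sumR l (fun _ => a) = INR (length l) * a.
Proof.
  induction l; simpl length; [simpl; lra |].
  rewrite S_INR. simpl. rewrite IHl. lra.
Qed.

Lemma filter_notin r l : ~ In r l -> filter (fun i => negb (Nat.eqb i r)) l = l.
Proof.
  induction l; simpl; intros H; auto.
  destruct (Nat.eqb_spec a r); [exfalso; auto |]. simpl. rewrite IHl; auto.
Qed.

Lemma sumR_split l f r : NoDup l -> In r l ->
  sumR l f = f r + sumR (filter (fun i => negb (Nat.eqb i r)) l) f.
Proof.
  induction l; simpl; intros Hn Hi; [contradiction |].
  inversion Hn; subst.
  destruct (Nat.eqb_spec a r).
  - subst. simpl. rewrite filter_notin; auto.
  - simpl. destruct Hi as [-> | Hi]; [congruence |]. rewrite (IHl H2 Hi). lra.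
Qed.

Lemma in_without n r ord i :
  Permutation ord (filter (fun i => negb (Nat.eqb i r)) (players n)) ->
  In i ord <-> (i < n)%nat /\ i <> r.
Proof.
  intros Hp. split; intros H.
  - apply (Permutation_in _ Hp), filter_In in H as [H1 H2].
    unfold players in H1. apply in_seq in H1. split; [lia |].
    destruct (Nat.eqb_spec i r); simpl in H2; auto; discriminate.
  - apply (Permutation_in _ (Permutation_sym Hp)), filter_In. split.
    + unfold players. apply in_seq. lia.
    + destruct (Nat.eqb_spec i r); auto; tauto.
Qed.

Lemma sum_players_split n r ord f : (r < n)%nat ->
  Permutation ord (filter (fun i => negb (Nat.eqb i r)) (players n)) ->
  sumR (players n) f = f r + sumR ord f.
Proof.
  intros Hr Hp. rewrite (sumR_split _ _ r).
  - rewrite (sumR_perm _ _ _ (Permutation_sym Hp)). reflexivity.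
  - apply seq_NoDup.
  - unfold players; apply in_seq; lia.
Qed.

Lemma step_price_nonneg c j : 0 <= c -> 0 <= 2 ^ j / 8 * c.
Proof.
  intros Hc. assert (0 < 2 ^ j) by (apply pow_lt; lra).
  apply Rmult_le_pos; [unfold Rdiv; apply Rmult_le_pos |]; lra.
Qed.

Lemma overlap_nonneg k j t : 0 <= step_overlap k j t.
Proof. apply Rmax_l. Qed.

Lemma overlap_mono k j a b : a <= b -> step_overlap k j a <= step_overlap k j b.
Proof. intros. unfold step_overlap, Rmax, Rmin. repeat destruct Rle_dec; lra. Qed.

Lemma overlap_telescope k K t : (0 < k)%nat -> 0 <= t ->
  sumR (seq 1 K) (fun j => step_overlap k j t) = Rmin t (INR K / (2 * INR k)).
Proof.
  intros Hk Ht. assert (HK : 0 < INR k) by (apply lt_0_INR; auto).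
  induction K.
  - simpl. replace (0 / (2 * INR k)) with 0 by (unfold Rdiv; ring).
    unfold Rmin. destruct Rle_dec; lra.
  - rewrite seq_S, sumR_app, IHK. simpl sumR. unfold step_overlap.
    replace (1 + K)%nat with (S K) by lia. replace (S K - 1)%nat with K by lia.
    rewrite S_INR.
    replace ((INR K + 1) / (2 * INR k)) with (INR K / (2 * INR k) + / (2 * INR k))
      by (field; lra).
    assert (0 < / (2 * INR k)) by (apply Rinv_0_lt_compat; lra).
    unfold Rmin, Rmax. repeat destruct Rle_dec; lra.
Qed.

Lemma Pcum_mono c k a b : 0 <= c -> a <= b -> Pcum c k a <= Pcum c k b.
Proof.
  intros Hc Hab. apply sumR_le. intros j _.
  apply Rmult_le_compat_l; [apply step_price_nonneg | apply overlap_mono]; auto.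
Qed.

Lemma Pcum_zero c k : (0 < k)%nat -> Pcum c k 0 = 0.
Proof.
  intros Hk. assert (0 < INR k) by (apply lt_0_INR; auto).
  unfold Pcum. rewrite (sumR_ext _ _ (fun _ => 0)).
  - rewrite sumR_const. ring.
  - intros j _. replace (step_overlap k j 0) with 0; [ring |]. unfold step_overlap.
    assert (0 <= INR (j - 1) / (2 * INR k)).
    { unfold Rdiv. apply Rmult_le_pos; [apply pos_INR |].
      left. apply Rinv_0_lt_compat; lra. }
    unfold Rmax, Rmin. repeat destruct Rle_dec; lra.
Qed.

(* Revenue lower bound: once step m is sold out, its full price has been collected. *)
Lemma Pcum_lower c k m t : 0 <= c -> (1 <= m <= k)%nat ->
  INR m * / (2 * INR k) <= t -> 2 ^ m / 8 * c * / (2 * INR k) <= Pcum c k t.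
Proof.
  intros Hc Hm Ht. assert (HK : 0 < INR k) by (apply lt_0_INR; lia).
  assert (Hov : step_overlap k m t = / (2 * INR k)).
  { unfold step_overlap, Rdiv. rewrite minus_INR by lia. simpl INR.
    assert (0 < / (2 * INR k)) by (apply Rinv_0_lt_compat; lra).
    rewrite Rmult_minus_distr_r, Rmult_1_l.
    unfold Rmax, Rmin. repeat destruct Rle_dec; lra. }
  rewrite <- Hov.
  apply (sumR_mem _ (fun j => 2 ^ j / 8 * c * step_overlap k j t)).
  - intros j _. apply Rmult_le_pos; [apply step_price_nonneg | apply overlap_nonneg]; auto.
  - apply in_seq. lia.
Qed.

(* Marginal price bound: below the point j/(2k) the price never exceeds 2^j c/8. *)
Lemma Pcum_increment_le c k j a b : 0 <= c -> (0 < k)%nat -> 0 <= a <= b ->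
  b <= INR j * / (2 * INR k) ->
  Pcum c k b - Pcum c k a <= 2 ^ j / 8 * c * (b - a).
Proof.
  intros Hc Hk Hab Hb. unfold Pcum. rewrite <- sumR_minus.
  assert (HK : 0 < INR k) by (apply lt_0_INR; lia).
  apply Rle_trans with
    (sumR (seq 1 k) (fun m => 2 ^ j / 8 * c * (step_overlap k m b - step_overlap k m a))).
  - apply sumR_le. intros m _.
    destruct (Compare_dec.le_lt_dec m j) as [Hmj | Hmj].
    + rewrite <- Rmult_minus_distr_l. apply Rmult_le_compat_r.
      * generalize (overlap_mono k m a b ltac:(lra)). lra.
      * apply Rmult_le_compat_r; auto. unfold Rdiv.
        apply Rmult_le_compat_r; [lra |]. apply Rle_pow; auto; lra.
    + assert (Hzero : forall t, t <= b -> step_overlap k m t = 0).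
      { intros t Htb. unfold step_overlap, Rdiv.
        assert (INR j <= INR (m - 1)) by (apply le_INR; lia).
        assert (INR j * / (2 * INR k) <= INR (m - 1) * / (2 * INR k)).
        { apply Rmult_le_compat_r; auto. left; apply Rinv_0_lt_compat; lra. }
        unfold Rmax, Rmin. repeat destruct Rle_dec; lra. }
      rewrite (Hzero a), (Hzero b) by lra. lra.
  - rewrite sumR_scal. apply Rmult_le_compat_l; [apply step_price_nonneg; auto |].
    rewrite sumR_minus, !overlap_telescope by (auto; lra).
    unfold Rmin. repeat destruct Rle_dec; lra.
Qed.

Lemma cost_zero c k z : cost c k z 0 = 0.
Proof. unfold cost. rewrite Rplus_0_r. ring. Qed.

Lemma cost_nonneg c k z d : 0 <= c -> 0 <= d -> 0 <= cost c k z d.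
Proof.
  intros Hc Hd. unfold cost.
  assert (Pcum c k z <= Pcum c k (z + d)) by (apply Pcum_mono; lra). lra.
Qed.

Lemma vbar_le_twice_half v B i y :
  concave_on01 (v i) -> nondecr_on01 (v i) -> nonneg_on01 (v i) ->
  0 < B i -> 0 <= y <= 1 -> 0 <= vbar v B i y <= 2 * vbar v B i (1/2).
Proof.
  intros Hc Hnd Hnn HB Hy.
  assert (H1 := Hc 1 0 (1/2) ltac:(lra) ltac:(lra) ltac:(lra)).
  replace (1/2 * 1 + (1 - 1/2) * 0) with (1/2) in H1 by ring.
  assert (0 <= v i 0) by (apply Hnn; lra).
  assert (0 <= v i y) by (apply Hnn; lra).
  assert (v i y <= v i 1) by (apply Hnd; lra).
  unfold vbar, Rmin. repeat destruct Rle_dec; lra.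
Qed.

(* Chord slopes of a concave function decrease: an increment of slope at most H
   right after a bounds the slope of the chord from a to any y > a by H. *)
Lemma concave_slope f a y d H : concave_on01 f -> 0 <= a -> a < y <= 1 ->
  0 < d <= y - a -> f (a + d) - f a <= H * d -> f y - f a <= H * (y - a).
Proof.
  intros Hc Ha Hy Hd Hinc.
  set (s := d / (y - a)).
  assert (Hds : d = s * (y - a)) by (unfold s; field; lra).
  assert (Hs0 : 0 < s) by (unfold s; apply Rdiv_lt_0_compat; lra).
  assert (Hs1 : s <= 1) by nra.
  assert (Hcv := Hc y a s ltac:(lra) ltac:(lra) ltac:(lra)).
  replace (s * y + (1 - s) * a) with (a + d) in Hcv by (rewrite Hds; ring).
  apply (Rmult_le_reg_l s); [lra |].
  replace (s * (H * (y - a))) with (H * d) by (rewrite Hds; ring). lra.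
Qed.

(* Individual rationality: buying nothing is always allowed, so a best response
   pays at most its capped value. *)
Lemma best_response_ir v B c k i z xi : nonneg_on01 (v i) -> 0 < B i -> 0 <= z ->
  best_response v B c k i z xi -> cost c k z xi <= vbar v B i xi /\ 0 <= vbar v B i xi.
Proof.
  intros Hnn HB Hz [Hx [Hbud Hopt]].
  assert (H0 := Hopt 0 ltac:(lra) ltac:(rewrite cost_zero; lra)).
  rewrite cost_zero in H0.
  assert (0 <= v i 0) by (apply Hnn; lra).
  assert (0 <= v i xi) by (apply Hnn; lra).
  unfold vbar, Rmin. destruct Rle_dec; split; lra.
Qed.

(* A buyer who stopped at z + xi while the marginal price there was at most H
   (over a stretch of positive length D) values any amount y at most his capped
   value plus H y: otherwise buying slightly more would raise his utility. *)
Lemma best_response_deviation v B c k i z xi H D :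
  concave_on01 (v i) -> nondecr_on01 (v i) -> nonneg_on01 (v i) -> 0 < B i ->
  0 <= z -> best_response v B c k i z xi -> 0 < H -> 0 < D ->
  (forall d, 0 <= d <= D ->
     z + xi + d <= 1/2 /\ cost c k z (xi + d) <= cost c k z xi + H * d) ->
  forall y, 0 <= y <= 1 -> vbar v B i y <= vbar v B i xi + H * y.
Proof.
  intros Hcc Hnd Hnn HB Hz Hbr HH HD Hmarg y Hy.
  destruct (best_response_ir v B c k i z xi Hnn HB Hz Hbr) as [Hir _].
  destruct Hbr as [Hx [Hbud Hopt]].
  set (p := cost c k z xi) in *.
  assert (0 <= H * y) by nra.
  destruct (Rle_dec y xi) as [Hyx | Hyx].
  { assert (v i y <= v i xi) by (apply Hnd; lra).
    unfold vbar, Rmin in *. repeat destruct Rle_dec; lra. }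
  destruct (Req_dec p (B i)) as [Hpb | Hpb].
  { unfold vbar, Rmin in *. repeat destruct Rle_dec; lra. }
  (* buy d more, with d small enough to stay in budget and below y *)
  set (d := Rmin D (Rmin ((B i - p) / H) (y - xi))).
  assert (Hroom : 0 < (B i - p) / H) by (apply Rdiv_lt_0_compat; lra).
  assert (Hd : 0 < d <= D /\ d <= (B i - p) / H /\ d <= y - xi)
    by (unfold d, Rmin; repeat destruct Rle_dec; lra).
  assert (Hdbud : H * d <= B i - p).
  { replace (B i - p) with (H * ((B i - p) / H)) by (field; lra).
    apply Rmult_le_compat_l; lra. }
  destruct (Hmarg d ltac:(lra)) as [Hend Hcost].
  assert (Hgain := Hopt (xi + d) ltac:(lra) ltac:(lra)).
  assert (Hslope := concave_slope (v i) xi y d H Hcc ltac:(lra) ltac:(lra) ltac:(lra)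
                      ltac:(lra)).
  assert (H * (y - xi) <= H * y) by nra.
  unfold vbar, Rmin. repeat destruct Rle_dec; lra.
Qed.

Lemma sell_run_spec v B c k x pi : forall order z, 0 <= z <= 1/2 ->
  sell_run v B c k order z x pi ->
  z <= z + sumR order x <= 1/2 /\
  sumR order pi = Pcum c k (z + sumR order x) - Pcum c k z /\
  (forall i, In i order -> exists zi, 0 <= zi /\ zi + x i <= z + sumR order x /\
     best_response v B c k i zi (x i) /\ pi i = cost c k zi (x i)).
Proof.
  induction order as [| a rest IH]; intros z Hz Hrun.
  - simpl. rewrite Rplus_0_r. repeat split; try lra. intros i [].
  - destruct Hrun as [Hbr [Hpi Hrun]].
    destruct Hbr as [Hx Hbr'].
    destruct (IH (z + x a) ltac:(lra) Hrun) as [H1 [H2 H3]].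
    simpl sumR.
    replace (z + (x a + sumR rest x)) with (z + x a + sumR rest x) by ring.
    split; [lra |]. split.
    + rewrite H2, Hpi. unfold cost. lra.
    + intros i [<- | Hi].
      * exists z. split; [lra |]. split; [lra |]. exact (conj (conj Hx Hbr') Hpi).
      * apply H3; auto.
Qed.

Lemma find_step N D t : 0 <= t -> t < INR N * D ->
  exists m, (m < N)%nat /\ INR m * D <= t < INR (S m) * D.
Proof.
  intros Ht. induction N; intros HN.
  - simpl in HN. lra.
  - destruct (Rlt_dec t (INR N * D)) as [h | h].
    + destruct (IHN h) as [m [? ?]]. exists m; split; auto; lia.
    + exists N. split; [lia | lra].
Qed.

Lemma kpar_ceiling n : (1 <= n)%nat ->
  8 * log2R (INR n) <= INR (kpar n) < 8 * log2R (INR n) + 1.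
Proof.
  intros Hn.
  assert (Ha : 0 <= 8 * log2R (INR n)).
  { unfold log2R. assert (0 < ln 2) by (generalize ln_lt_2; lra).
    assert (0 <= ln (INR n)).
    { rewrite <- ln_1. destruct (Nat.eq_dec n 1) as [-> | Hn1]; [simpl; lra |].
      left. apply ln_increasing; [lra |].
      replace 1 with (INR 1) by reflexivity. apply lt_INR. lia. }
    unfold Rdiv. apply Rmult_le_pos; [lra |].
    apply Rmult_le_pos; [lra | left; apply Rinv_0_lt_compat; lra]. }
  unfold kpar. set (a := 8 * log2R (INR n)) in *.
  destruct (archimed (- a)) as [A1 A2].
  assert (Hz : (0 <= 1 - up (- a))%Z) by (apply le_IZR; rewrite minus_IZR; simpl; lra).
  rewrite INR_IZR_INZ, Z2Nat.id, minus_IZR by auto. simpl. lra.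
Qed.

Lemma kpar_facts n : (2 <= n)%nat ->
  (8 <= kpar n)%nat /\ INR (kpar n) <= 18 * ln (INR n) /\ INR n <= 2 ^ (kpar n - 1).
Proof.
  intros Hn.
  destruct (kpar_ceiling n ltac:(lia)) as [Hlo Hhi].
  assert (Hn2 : 2 <= INR n) by (replace 2 with (INR 2) by (simpl; lra); apply le_INR; auto).
  assert (Hl2 := ln_lt_2).
  assert (Hln : ln 2 <= ln (INR n)).
  { destruct (Req_dec (INR n) 2) as [E | E]; [rewrite E; lra |].
    left. apply ln_increasing; lra. }
  set (L := ln (INR n)) in *.
  assert (Ha : 8 * log2R (INR n) * ln 2 = 8 * L) by (unfold log2R; fold L; field; lra).
  set (a := 8 * log2R (INR n)) in *.
  assert (Ha8 : 8 <= a) by nra.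
  assert (Ha16 : a <= 16 * L) by nra.
  assert (Hk8 : (8 <= kpar n)%nat).
  { destruct (Compare_dec.le_lt_dec 8 (kpar n)) as [h | h]; auto.
    assert (INR (kpar n) <= 7) by (replace 7 with (INR 7) by (simpl; lra); apply le_INR; lia).
    exfalso; lra. }
  split; [exact Hk8 | split; [lra |]].
  (* ln (2^(k-1)) = (k-1) ln 2 >= 8 ln n - ln 2 >= ln n *)
  assert (Hk1 : INR (kpar n - 1) = INR (kpar n) - 1)
    by (rewrite minus_INR by lia; simpl; lra).
  assert (Hp : ln (2 ^ (kpar n - 1)) = INR (kpar n - 1) * ln 2) by (apply ln_pow; lra).
  assert (Hge : L <= ln (2 ^ (kpar n - 1))) by (rewrite Hp, Hk1; nra).
  assert (0 < 2 ^ (kpar n - 1)) by (apply pow_lt; lra).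
  destruct (Rle_dec (INR n) (2 ^ (kpar n - 1))) as [h | h]; auto.
  assert (ln (2 ^ (kpar n - 1)) < L) by (apply ln_increasing; lra). lra.
Qed.

(* The welfare bound for one run of Estimate-and-Price. *)
Section WelfareBound.

Variables (n : nat) (v : nat -> R -> R) (B : nat -> R) (r1 r2 : nat).
Hypothesis n_ge2 : (2 <= n)%nat.
Hypothesis valuations : forall i, (i < n)%nat ->
  concave_on01 (v i) /\ nondecr_on01 (v i) /\ nonneg_on01 (v i) /\ 0 < B i.
Hypothesis r1_lt : (r1 < n)%nat.
Hypothesis r1_max : forall i, (i < n)%nat -> vbar v B i (1/2) <= vbar v B r1 (1/2).
Hypothesis r2_lt : (r2 < n)%nat.
Hypothesis r2_ne : r2 <> r1.

Variables (x pi x' pi' : nat -> R) (ord ord' : list nat).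
Hypothesis ord_perm : Permutation ord (filter (fun i => negb (Nat.eqb i r1)) (players n)).
Hypothesis run1 : sell_run v B (vbar v B r1 (1/2)) (kpar n) ord 0 x pi.
Hypothesis ord'_perm : Permutation ord' (filter (fun i => negb (Nat.eqb i r2)) (players n)).
Hypothesis run2 : sell_run v B (vbar v B r2 (1/2)) (kpar n) ord' 0 x' pi'.

Local Notation k := (kpar n).
Local Notation K := (INR (kpar n)).
Local Notation D := (/ (2 * INR (kpar n))).
Local Notation c := (vbar v B r1 (1/2)).
Local Notation c2 := (vbar v B r2 (1/2)).
Local Notation sold := (sumR ord x).
Local Notation Woth := (sumR ord (fun i => vbar v B i (x i))).
Local Notation yEP := (EP_alloc v B r1 r2 x x' pi').
Local Notation Wr1 := (vbar v B r1 (yEP r1)).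

Lemma k_ge8 : 8 <= K.
Proof.
  replace 8 with (INR 8) by (simpl; lra). apply le_INR. apply kpar_facts; auto.
Qed.

Lemma step_length : D * (2 * K) = 1.
Proof. assert (H := k_ge8). field. lra. Qed.

(* Every capped valuation is at most 2c on [0,1], since r1 maximizes \bar v_i(1/2). *)
Lemma vbar_le_2c i y : (i < n)%nat -> 0 <= y <= 1 -> 0 <= vbar v B i y <= 2 * c.
Proof.
  intros Hi Hy. destruct (valuations i Hi) as [Hc [Hnd [Hnn HB]]].
  destruct (vbar_le_twice_half v B i y Hc Hnd Hnn HB Hy).
  assert (vbar v B i (1/2) <= c) by auto. lra.
Qed.

Lemma c_nonneg : 0 <= c.
Proof. apply (vbar_le_2c r1 (1/2)); auto; lra. Qed.

Lemma buyer_spec i : In i ord -> exists zi, 0 <= zi /\ zi + x i <= sold /\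
  best_response v B c k i zi (x i) /\ pi i <= vbar v B i (x i) /\ 0 <= vbar v B i (x i).
Proof.
  intros Hi.
  destruct (sell_run_spec v B c k x pi ord 0 ltac:(lra) run1) as [_ [_ Hbuy]].
  destruct (Hbuy i Hi) as [zi [Hz [Hend [Hbr Hpi]]]].
  destruct (proj1 (in_without n r1 ord i ord_perm) Hi) as [Hin _].
  destruct (valuations i Hin) as [_ [_ [Hnn HB]]].
  destruct (best_response_ir v B c k i zi (x i) Hnn HB Hz Hbr).
  exists zi. split; [lra |]. split; [lra |]. split; [exact Hbr | rewrite Hpi; auto].
Qed.

Lemma sold_range : 0 <= sold <= 1/2.
Proof.
  destruct (sell_run_spec v B c k x pi ord 0 ltac:(lra) run1) as [H _]. lra.
Qed.

Lemma Woth_nonneg : 0 <= Woth.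
Proof.
  apply sumR_nonneg. intros i Hi. destruct (buyer_spec i Hi) as [? [? [? [? [? ?]]]]]. auto.
Qed.

Lemma revenue_le_Woth : Pcum c k sold <= Woth.
Proof.
  destruct (kpar_facts n n_ge2) as [Hk8 _].
  destruct (sell_run_spec v B c k x pi ord 0 ltac:(lra) run1) as [_ [Hrev _]].
  rewrite Rplus_0_l, Pcum_zero in Hrev by lia.
  replace (Pcum c k sold) with (sumR ord pi) by lra.
  apply sumR_le. intros i Hi. destruct (buyer_spec i Hi) as [? [? [? [? [? ?]]]]]. auto.
Qed.

Lemma EP_welfare_split : LW n v B yEP = Wr1 + Woth.
Proof.
  unfold LW. rewrite (sum_players_split n r1 ord) by auto. f_equal.
  apply sumR_ext. intros i Hi.
  destruct (proj1 (in_without n r1 ord i ord_perm) Hi) as [_ Hi1].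
  unfold EP_alloc. destruct (Nat.eqb_spec i r1); [congruence | reflexivity].
Qed.

(* r1 either takes his Sell-Without-r2 outcome, whose utility is at least
   v(1/2) - 2 c2, or half the good at price 2 c2; either way Wr1 >= c - 2 c2. *)
Lemma r1_guarantee : 0 <= Wr1 /\ c - 2 * c2 <= Wr1.
Proof.
  assert (Hc2 : 0 <= c2) by (apply (vbar_le_2c r2 (1/2)); auto; lra).
  destruct (valuations r1 r1_lt) as [_ [_ [Hnn HB]]].
  assert (Hin : In r1 ord') by (apply (in_without n r2 ord' r1 ord'_perm); auto).
  destruct (sell_run_spec v B c2 k x' pi' ord' 0 ltac:(lra) run2) as [_ [_ Hbuy]].
  destruct (Hbuy r1 Hin) as [z' [Hz [_ [Hbr Hpi]]]].
  destruct (best_response_ir v B c2 k r1 z' (x' r1) Hnn HB Hz Hbr) as [Hir Hpos].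
  assert (Hpay : 0 <= pi' r1)
    by (rewrite Hpi; apply cost_nonneg; [lra | apply Hbr]).
  assert (0 <= v r1 (1/2)) by (apply Hnn; lra).
  unfold EP_alloc. rewrite Nat.eqb_refl.
  destruct Rle_dec as [Htake | Hhalf].
  - split; auto. rewrite <- Hpi in Hir.
    unfold vbar, Rmin in *. repeat destruct Rle_dec; lra.
  - assert (0 <= c) by exact c_nonneg. lra.
Qed.

Lemma EP_welfare_nonneg : 0 <= LW n v B yEP.
Proof.
  rewrite EP_welfare_split. destruct r1_guarantee as [Hr1 _].
  assert (HW := Woth_nonneg). lra.
Qed.

Lemma feasible_unit y : feasible n y -> forall i, (i < n)%nat -> 0 <= y i <= 1.
Proof.
  intros [Hy0 Hy1] i Hi. split; auto. rewrite <- Hy1.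
  apply (sumR_mem (players n) y i).
  - intros j Hj. unfold players in Hj; apply in_seq in Hj. apply Hy0; lia.
  - unfold players; apply in_seq; lia.
Qed.

Lemma LW_le_2nc y : feasible n y -> LW n v B y <= 2 * INR n * c.
Proof.
  intros Hy. unfold LW.
  apply Rle_trans with (sumR (players n) (fun _ => 2 * c)).
  - apply sumR_le. intros i Hi. unfold players in Hi; apply in_seq in Hi.
    apply vbar_le_2c; [lia |]. apply (feasible_unit y Hy); lia.
  - rewrite sumR_const. unfold players. rewrite length_seq. lra.
Qed.

Lemma sold_out_bound : INR (k - 1) * D <= sold -> INR n * c <= 16 * K * Woth.
Proof.
  intros Hsold. destruct (kpar_facts n n_ge2) as [Hk8 [_ Hpow]].
  assert (Hc := c_nonneg). assert (HK := k_ge8). assert (HD := step_length).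
  assert (Hl := Pcum_lower c k (k - 1) sold Hc ltac:(lia) Hsold).
  assert (Hrev := revenue_le_Woth).
  assert (Hnc : INR n * c <= 2 ^ (k - 1) * c) by (apply Rmult_le_compat_r; lra).
  replace (2 ^ (k - 1) * c) with (16 * K * (2 ^ (k - 1) / 8 * c * D)) in Hnc
    by (field; lra).
  assert (16 * K * (2 ^ (k - 1) / 8 * c * D) <= 16 * K * Woth)
    by (apply Rmult_le_compat_l; lra).
  lra.
Qed.

(* If the sale ended before the point (m+1)/(2k), every buyer could have bought
   more at price at most 2^(m+2) c/8. *)
Lemma buyers_marginal_bound m : (m + 2 <= k)%nat -> sold < INR (S m) * D -> 0 < c ->
  forall i, In i ord -> forall y, 0 <= y <= 1 ->
  vbar v B i y <= vbar v B i (x i) + 2 ^ (m + 2) / 8 * c * y.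
Proof.
  intros Hm Hsold Hc i Hi.
  destruct (buyer_spec i Hi) as [zi [Hz [Hend [Hbr _]]]].
  destruct (proj1 (in_without n r1 ord i ord_perm) Hi) as [Hin _].
  destruct (valuations i Hin) as [Hcc [Hnd [Hnn HB]]].
  assert (HK := k_ge8). assert (HD := step_length).
  assert (HD0 : 0 < D) by (apply Rinv_0_lt_compat; lra).
  assert (Hedge : INR (m + 2) * D = INR (S m) * D + D)
    by (replace (m + 2)%nat with (S (S m)) by lia; rewrite (S_INR (S m)); ring).
  assert (Hroom : INR (m + 2) * D <= 1/2).
  { assert (INR (m + 2) <= K) by (apply le_INR; lia). nra. }
  assert (HH : 0 < 2 ^ (m + 2) / 8 * c)
    by (assert (0 < 2 ^ (m + 2)) by (apply pow_lt; lra); apply Rmult_lt_0_compat; lra).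
  assert (Hxi : 0 <= x i) by apply Hbr.
  apply (best_response_deviation v B c k i zi (x i) _ D Hcc Hnd Hnn HB Hz Hbr HH HD0).
  intros d Hd. split; [lra |].
  assert (Hinc := Pcum_increment_le c k (m + 2) (zi + x i) (zi + x i + d)
                    ltac:(lra) ltac:(lia) ltac:(lra) ltac:(lra)).
  unfold cost. replace (zi + (x i + d)) with (zi + x i + d) by ring.
  replace (2 ^ (m + 2) / 8 * c * d)
    with (2 ^ (m + 2) / 8 * c * (zi + x i + d - (zi + x i))) by ring.
  lra.
Qed.

Lemma welfare_under_price_bound H : 0 <= H ->
  (forall i, In i ord -> forall y, 0 <= y <= 1 ->
     vbar v B i y <= vbar v B i (x i) + H * y) ->
  c2 <= Woth + H / 2 /\ (forall y, feasible n y -> LW n v B y <= 2 * c + Woth + H).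
Proof.
  intros HH Hdev. split.
  - assert (Hr2 : In r2 ord) by (apply (in_without n r1 ord r2 ord_perm); auto).
    assert (A := Hdev r2 Hr2 (1/2) ltac:(lra)).
    assert (vbar v B r2 (x r2) <= Woth).
    { apply (sumR_mem ord (fun i => vbar v B i (x i))); auto.
      intros j Hj. destruct (buyer_spec j Hj) as [? [? [? [? [? ?]]]]]. auto. }
    lra.
  - intros y Hy. assert (Hunit := feasible_unit y Hy).
    assert (Hothers : sumR ord (fun i => vbar v B i (y i)) <= Woth + H).
    { apply Rle_trans with (sumR ord (fun i => vbar v B i (x i) + H * y i)).
      - apply sumR_le. intros i Hi. apply Hdev; auto.
        apply Hunit, (in_without n r1 ord i ord_perm); auto.
      - rewrite sumR_plus, sumR_scal.
        assert (E := sum_players_split n r1 ord y r1_lt ord_perm).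
        destruct Hy as [_ Hy1]. assert (0 <= y r1) by (apply Hunit; auto). nra. }
    unfold LW. rewrite (sum_players_split n r1 ord) by auto.
    assert (vbar v B r1 (y r1) <= 2 * c) by (apply vbar_le_2c; auto).
    lra.
Qed.

(* If step m was sold out, the price 2^(m+2) c/8 is c/2 (m = 0) or at most
   8 k Woth, because the revenue already contains the price of step m times D. *)
Lemma price_level_bound m : (m + 2 <= k)%nat -> INR m * D <= sold ->
  2 ^ (m + 2) / 8 * c <= c / 2 \/ 2 ^ (m + 2) / 8 * c <= 8 * K * Woth.
Proof.
  intros Hm Hsold. destruct m as [| m].
  - left. simpl. lra.
  - right. assert (Hc := c_nonneg). assert (HD := step_length). assert (HK := k_ge8).
    assert (Hl := Pcum_lower c k (S m) sold Hc ltac:(lia) Hsold).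
    assert (Hrev := revenue_le_Woth).
    set (h := 2 ^ S m / 8 * c) in *.
    replace (2 ^ (S m + 2) / 8 * c) with (4 * h) by (unfold h; rewrite pow_add; simpl; field).
    assert (h <= 2 * K * Woth).
    { replace h with (h * D * (2 * K)) by (rewrite Rmult_assoc, HD; ring).
      rewrite (Rmult_comm (2 * K) Woth). apply Rmult_le_compat_r; lra. }
    lra.
Qed.

Lemma partial_sale_bound m y : feasible n y -> (m + 2 <= k)%nat ->
  INR m * D <= sold < INR (S m) * D -> 0 < c ->
  LW n v B y <= 32 * K * (Wr1 + Woth).
Proof.
  intros Hy Hm [Hlo Hhi] Hc.
  set (H := 2 ^ (m + 2) / 8 * c).
  assert (HH : 0 <= H) by (apply step_price_nonneg; lra).
  destruct (welfare_under_price_bound H HH (buyers_marginal_bound m Hm Hhi Hc))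
    as [Hc2 HLW].
  assert (HLWy := HLW y Hy).
  destruct r1_guarantee as [Hr0 Hr1].
  assert (HW := Woth_nonneg). assert (HK := k_ge8).
  destruct (price_level_bound m Hm Hlo) as [Hp | Hp]; fold H in Hp; nra.
Qed.

Lemma EP_approximation y : feasible n y -> LW n v B y <= 32 * K * LW n v B yEP.
Proof.
  intros Hy. rewrite EP_welfare_split.
  destruct (kpar_facts n n_ge2) as [Hk8 _].
  assert (HLW := LW_le_2nc y Hy).
  destruct r1_guarantee as [Hr0 _].
  assert (HW := Woth_nonneg). assert (HK := k_ge8).
  destruct (Rle_dec c 0) as [Hc0 | Hc0].
  { assert (0 <= INR n) by apply pos_INR. nra. }
  destruct (Rlt_dec sold (INR (k - 1) * D)) as [Hpart | Hfull].
  - destruct (find_step (k - 1) D sold (proj1 sold_range) Hpart) as [m [Hm Hstep]].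
    apply (partial_sale_bound m); auto; lia || lra.
  - assert (Hout := sold_out_bound ltac:(lra)). nra.
Qed.

End WelfareBound.

Theorem mainTheorem17 :
  exists C : R, 0 < C /\
  forall (n : nat) (v : nat -> R -> R) (B : nat -> R),
    (2 <= n)%nat ->
    (forall i, (i < n)%nat ->
       concave_on01 (v i) /\ nondecr_on01 (v i) /\ nonneg_on01 (v i) /\ 0 < B i) ->
  forall (r1 r2 : nat),
    (r1 < n)%nat ->
    (forall i, (i < n)%nat -> vbar v B i (1/2) <= vbar v B r1 (1/2)) ->
    (r2 < n)%nat -> r2 <> r1 ->
    (forall i, (i < n)%nat -> i <> r1 -> vbar v B i (1/2) <= vbar v B r2 (1/2)) ->
  forall (x pi x' pi' : nat -> R),
    SellWithout n v B r1 x pi ->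
    SellWithout n v B r2 x' pi' ->
  forall Wstar : R, is_lub (LW_values n v B) Wstar ->
    LW n v B (EP_alloc v B r1 r2 x x' pi') >= Wstar / (C * ln (INR n)).
Proof.
  exists 1000. split; [lra |].
  intros n v B Hn Hv r1 r2 Hr1 Hmax1 Hr2 Hne _ x pi x' pi'
    [ord [Hperm Hrun]] [ord' [Hperm' Hrun']] W Hlub.
  set (EP := LW n v B (EP_alloc v B r1 r2 x x' pi')).
  destruct (kpar_facts n Hn) as [_ [Hlog _]].
  assert (HK : 8 <= INR (kpar n)) by (eapply k_ge8; eauto).
  assert (HEP : 0 <= EP) by (eapply EP_welfare_nonneg; eauto).
  assert (HW : W <= 32 * INR (kpar n) * EP).
  { apply (proj2 Hlub). intros w [y [Hy ->]]. eapply EP_approximation; eauto. }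
  assert (Hln : 0 < ln (INR n)) by lra.
  apply Rle_ge. unfold Rdiv.
  apply (Rmult_le_reg_r (1000 * ln (INR n))); [lra |].
  rewrite Rmult_assoc, Rinv_l, Rmult_1_r by lra.
  nra.
Qed.
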